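(* Let $\psi:X\to Y$ be a function between two finite metric spaces such that $\psi(X)$ is $D$-dense in $Y$ for some $D\geq0$. Let $B\subseteq Y$ be nonempty. Then $$|\psi^{-1}(B)|\geq|B|\cdot\frac{1}{N_Y(D)}\cdot\left(1-\frac{|\partial^{\rm in}_D(B)|}{|B|}\right).$$
   Context: A subset $S\subseteq Y$ is $D$-dense if every point of $Y$ is within distance $D$ of a point of $S$. $N_Y(D)=\sup_{y\in Y}|B(y,D)|$, where $B(y,D)$ is the closed ball. The inner $D$-boundary of $B\subseteq Y$ is $\partial^{\rm in}_D(B)=\{y\in B: d(y,Y\setminus B)\leq D\}$. *)

From HB Require Import structures.
From mathcomp Require Import all_boot all_order all_algebra.
Set Implicit Arguments. Unset Strict Implicit. Unset Printing Implicit Defensive.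
Import Order.TTheory GRing.Theory Num.Theory.
Local Open Scope ring_scope.

Definition is_metric (R : realFieldType) (T : finType) (d : T -> T -> R) : Prop :=
  [/\ forall x y, 0 <= d x y,
      forall x y, (d x y == 0) = (x == y),
      forall x y, d x y = d y x &
      forall x y z, d x z <= d x y + d y z].

Definition dense_in (R : realFieldType) (Y : finType) (d : Y -> Y -> R)
  (S : {set Y}) (D : R) : Prop :=
  forall y : Y, exists2 s, s \in S & d y s <= D.

Definition cball (R : realFieldType) (Y : finType) (d : Y -> Y -> R)
  (y : Y) (D : R) : {set Y} := [set z | d y z <= D].

(* N_Y(D) = sup_y |B(y,D)| (a max, since Y is finite; 0 if Y is empty) *)
Definition NY (R : realFieldType) (Y : finType) (d : Y -> Y -> R) (D : R) : nat :=
  \max_(y : Y) #|cball d y D|.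

(* inner D-boundary: y in B with d(y, Y \ B) <= D; since Y is finite the
   infimum is attained (and is +oo when Y \ B is empty) *)
Definition inner_boundary (R : realFieldType) (Y : finType) (d : Y -> Y -> R)
  (D : R) (B : {set Y}) : {set Y} :=
  [set y in B | [exists z in ~: B, d y z <= D]].

From HB Require Import structures.
From mathcomp Require Import all_boot all_order all_algebra.
From mathcomp Require Import ring.
Set Implicit Arguments.
Unset Strict Implicit.
Unset Printing Implicit Defensive.

Import Order.TTheory GRing.Theory Num.Theory.
Local Open Scope ring_scope.

(* Every point of B outside its inner D-boundary is within D of some psi x,
   and psi x must then lie in B.  Hence the D-balls around the points psi x,
   x in psi^-1(B), cover B minus its boundary, so that
   |B| - |boundary| <= |psi^-1(B)| N_Y(D); dividing by N_Y(D) gives the claim. *)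

Lemma card_bigcup_le (T I : finType) (A : {set I}) (F : I -> {set T}) :
  (#|\bigcup_(i in A) F i| <= \sum_(i in A) #|F i|)%N.
Proof.
elim/big_rec2: _ => [|i S n _ IH]; first by rewrite cards0.
by apply: leq_trans (leq_card_setU _ _) _; rewrite leq_add2l.
Qed.

Section Covering.

Variables (R : realFieldType) (Y : finType) (d : Y -> Y -> R).

Lemma inner_boundary_subset D (B : {set Y}) : inner_boundary d D B \subset B.
Proof. by apply/subsetP => y; rewrite inE => /andP[]. Qed.

Lemma card_cball_le_NY y D : (#|cball d y D| <= NY d D)%N.
Proof. exact: (@leq_bigmax _ (fun z => #|cball d z D|)). Qed.

Lemma card_bigcup_cball_le (I : finType) (A : {set I}) (f : I -> Y) D :
  (#|\bigcup_(i in A) cball d (f i) D| <= #|A| * NY d D)%N.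
Proof.
apply: leq_trans (card_bigcup_le _ _) _.
by rewrite -sum_nat_const; apply: leq_sum => i _; apply: card_cball_le_NY.
Qed.

Hypothesis d_sym : forall x y, d x y = d y x.

Lemma interior_subset_bigcup_cball (I : finType) (f : I -> Y) D (B : {set Y}) :
  dense_in d (f @: [set: I]) D ->
  B :\: inner_boundary d D B \subset \bigcup_(i in f @^-1: B) cball d (f i) D.
Proof.
move=> dense; apply/subsetP => y /setDP[yB].
rewrite inE yB /= => /existsPn far.
have [_ /imsetP[i _ ->] dyfi] := dense y.
apply/bigcupP; exists i; last by rewrite inE d_sym.
rewrite inE; apply: contraLR (far (f i)) => fiNB.
by rewrite negbK inE fiNB.
Qed.

Lemma card_interior_le (I : finType) (f : I -> Y) D (B : {set Y}) :
  dense_in d (f @: [set: I]) D ->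
  (#|B| - #|inner_boundary d D B| <= #|f @^-1: B| * NY d D)%N.
Proof.
move=> dense; rewrite -cardsDS ?inner_boundary_subset //.
apply: leq_trans (subset_leq_card (interior_subset_bigcup_cball B dense)) _.
exact: card_bigcup_cball_le.
Qed.

End Covering.

Lemma ratio_bound_of_covering (R : realFieldType) (b c m n : nat) :
  (0 < b)%N -> (c <= b)%N -> (b - c <= m * n)%N ->
  b%:R * (1 / n%:R) * (1 - c%:R / b%:R) <= m%:R :> R.
Proof.
move=> b_gt0 cb cover.
have [->|n_gt0] := posnP n; first by rewrite div1r invr0 mulr0 mul0r ler0n.
have -> : b%:R * (1 / n%:R) * (1 - c%:R / b%:R) = (b - c)%N%:R / n%:R :> R.
  by rewrite natrB //; field; rewrite !pnatr_eq0 -!lt0n b_gt0 n_gt0.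
by rewrite ler_pdivrMr ?ltr0n // -natrM ler_nat.
Qed.

Theorem lemma3p16 (R : realFieldType) (X Y : finType)
  (dX : X -> X -> R) (dY : Y -> Y -> R)
  (hX : is_metric dX) (hY : is_metric dY)
  (psi : X -> Y) (D : R) (hD : 0 <= D)
  (hdense : dense_in dY (psi @: [set: X]) D)
  (B : {set Y}) (hB : B != set0) :
  (#|psi @^-1: B|%:R : R) >=
    #|B|%:R * (1 / (NY dY D)%:R) *
      (1 - #|inner_boundary dY D B|%:R / #|B|%:R).
Proof.
have [_ _ dY_sym _] := hY.
have interior_le := card_interior_le dY_sym B hdense.
have boundary_le := subset_leq_card (inner_boundary_subset dY D B).
by apply: ratio_bound_of_covering; rewrite ?card_gt0.
Qed.
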